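(* Let $n\geq 2$. Assume that for every homogeneous, well-ordered $(n-1)\times(n-1)$ integer matrix $M'=(m'_{ij})$ of any degree $e$, a general form of degree $e$ in $\mathbb{C}[x,y,z]$ is the determinant of a matrix of forms with degree matrix $M'$ if and only if (1) $m'_{ii}\ge 0$ for all $i$ and (2) whenever $m'_{k\,k-1}<0$ for some $k$, the submatrix obtained by erasing the first $k-1$ rows and columns of $M'$ has degree $0$ or $e$. Let $M=(m_{ij})$ be a homogeneous, well-ordered $n\times n$ integer matrix of degree $d$ such that $m_{ii}\ge0$ for all $i$, and such that whenever $m_{k\,k-1}<0$ for some $k\in\{2,\dots,n\}$ the submatrix obtained by erasing the first $k-1$ rows and columns of $M$ has degree $0$ or $d$. Assume $m_{i1}=0$ for some $i$. Then a general form of degree $d$ in $\mathbb{C}[x,y,z]$ is the determinant of a matrix of forms whose degree matrix is $M$.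
   Context: A matrix of integers is homogeneous if every $2\times2$ submatrix $\begin{pmatrix} a&b\\ c&e\end{pmatrix}$ satisfies $a+e=b+c$; the degree of a square homogeneous matrix $(m_{ij})$ is $\sum_i m_{i\sigma(i)}$, independent of the permutation $\sigma$. Well-ordered: for $i'>i$, $j'>j$, $m_{i'j}\le m_{ij}$ and $m_{ij'}\ge m_{ij}$. A matrix of forms $(f_{ij})$ has degree matrix $(m_{ij})$ if each $f_{ij}$ is a homogeneous polynomial of degree $m_{ij}$ (zero allowed; necessarily zero if $m_{ij}<0$). ''General form'' means forms in a nonempty Zariski-open subset of the space of forms of that degree. *)

From HB Require Import structures.
From mathcomp Require Import all_boot all_order all_algebra.
From mathcomp Require Import mpoly.
Set Implicit Arguments. Unset Strict Implicit. Unset Printing Implicit Defensive.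
Import Order.TTheory GRing.Theory Num.Theory.
Local Open Scope ring_scope.

Definition mx_homogeneous n (M : 'M[int]_n) : Prop :=
  forall (i i' j j' : 'I_n), M i j + M i' j' = M i j' + M i' j.

Definition mx_deg n (M : 'M[int]_n) : int := \sum_(i < n) M i i.

Definition well_ordered n (M : 'M[int]_n) : Prop :=
  forall (i i' j j' : 'I_n), (i < i')%N -> (j < j')%N ->
    M i' j <= M i j /\ M i j <= M i j'.

(* degree of the submatrix obtained by erasing the first k rows and columns
   (k counted in nat; with the paper's 1-based row index k_p = k+1 of
   m_{k_p, k_p-1}, this erases the first k_p - 1 rows and columns) *)
Definition tail_deg n (M : 'M[int]_n) (k : nat) : int :=
  \sum_(i < n | (k <= i)%N) M i i.

Definition diag_nonneg n (M : 'M[int]_n) : Prop := forall i : 'I_n, 0 <= M i i.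

Definition subdiag_cond n (M : 'M[int]_n) (e : int) : Prop :=
  forall (k l : 'I_n), (val k = (val l).+1)%N -> M k l < 0 ->
    tail_deg M k = 0 \/ tail_deg M k = e.

Definition form (F : closedFieldType) (d : nat) (f : {mpoly F[3]}) : Prop :=
  f \is ishomog1 d (@mdeg 3).

Definition has_degree_matrix (F : closedFieldType) n
    (A : 'M[{mpoly F[3]}]_n) (M : 'M[int]_n) : Prop :=
  forall i j, if (0 <= M i j) then form (absz (M i j)) (A i j) else A i j = 0.

Definition det_with_degree_matrix (F : closedFieldType) n (M : 'M[int]_n)
    (f : {mpoly F[3]}) : Prop :=
  exists A : 'M[{mpoly F[3]}]_n, has_degree_matrix A M /\ \det A = f.

Definition poly_fun (F : closedFieldType) (phi : {mpoly F[3]} -> F) : Prop :=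
  exists (k : nat) (ms : 'I_k -> 'X_{1..3}) (q : {mpoly F[k]}),
    forall f, phi f = q.@[fun i => f@_(ms i)].

Definition zariski_open (F : closedFieldType) (d : nat)
    (U : {mpoly F[3]} -> Prop) : Prop :=
  exists S : ({mpoly F[3]} -> F) -> Prop,
    (forall phi, S phi -> poly_fun phi) /\
    (forall f, U f <-> (form d f /\ exists phi, S phi /\ phi f != 0)).

Definition general_form (F : closedFieldType) (d : nat)
    (P : {mpoly F[3]} -> Prop) : Prop :=
  exists U, zariski_open d U /\ (exists f, U f) /\ (forall f, U f -> P f).

From HB Require Import structures.
From mathcomp Require Import all_boot all_order all_algebra.
From mathcomp Require Import mpoly.
From mathcomp Require Import zify.
Set Implicit Arguments. Unset Strict Implicit. Unset Printing Implicit Defensive.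
Import Order.TTheory GRing.Theory Num.Theory.
Local Open Scope ring_scope.

(* Deleting the row i and the first column, where the entry M i 0 = 0 is a
   constant, leaves a homogeneous well-ordered matrix of the same degree that
   still satisfies conditions (1) and (2).  By the induction hypothesis a
   general form is the determinant of some A' with that degree matrix; putting
   A' back into an n x n matrix whose first column is the unit vector (-1)^i e_i
   does not change the determinant and gives degree matrix M. *)

Lemma ltn_lift2 m (h : 'I_m.+1) (x y : 'I_m) :
  (lift h x < lift h y)%N = (x < y)%N.
Proof. by rewrite /= !ltnNge leq_bump2. Qed.

Lemma mx_homogeneous_split n (M : 'M[int]_n) : mx_homogeneous M ->
  forall i j r c, M r c = M r j + M i c - M i j.
Proof. by move=> hM i j r c; rewrite -hM addrK. Qed.

Lemma mx_homogeneous_minor n (M : 'M[int]_n.+1) i j :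
  mx_homogeneous M -> mx_homogeneous (row' i (col' j M)).
Proof. by move=> hM r r' c c'; rewrite !mxE. Qed.

Lemma well_ordered_minor n (M : 'M[int]_n.+1) i j :
  well_ordered M -> well_ordered (row' i (col' j M)).
Proof.
by move=> wM r r' c c' hr hc; rewrite !mxE; apply: wM; rewrite ltn_lift2.
Qed.

Lemma mx_deg_minor n (M : 'M[int]_n.+1) i j : mx_homogeneous M ->
  mx_deg (row' i (col' j M)) = mx_deg M - M i j.
Proof.
move=> /mx_homogeneous_split split; rewrite /mx_deg.
under eq_bigr => r _ do rewrite !mxE (split i j).
under [in RHS]eq_bigr => r _ do rewrite (split i j r r).
rewrite !big_split /= !sumrN !sumr_const !card_ord.
rewrite [in RHS](bigD1_ord i) // [X in _ = _ + X + _ - _](bigD1_ord j) //=.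
rewrite !mulrSr; lia.
Qed.

Lemma lift_eq_lift0 m (i : 'I_m.+1) (r : 'I_m) :
  (i <= r)%N -> lift i r = lift ord0 r.
Proof. by move=> hir; apply/val_inj; rewrite /= /bump hir. Qed.

Lemma diag_nonneg_minor_col0 m (M : 'M[int]_m.+1) i :
  well_ordered M -> diag_nonneg M -> diag_nonneg (row' i (col' ord0 M)).
Proof.
move=> wM h1 r; rewrite !mxE.
case: (leqP i r) => [hir|hri]; first by rewrite lift_eq_lift0.
have -> : lift i r = widen_ord (leqnSn m) r.
  by apply/val_inj; rewrite /= /bump leqNgt hri.
have lt_r : (widen_ord (leqnSn m) r < lift ord0 r)%N by [].
have [_ le_next] := wM _ _ _ _ lt_r lt_r.
exact: le_trans (h1 _) le_next.
Qed.

Lemma tail_deg_minor_col0 m (M : 'M[int]_m.+1) (i : 'I_m.+1) (k : nat) :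
  (i <= k)%N -> tail_deg (row' i (col' ord0 M)) k = tail_deg M k.+1.
Proof.
move=> hik; rewrite /tail_deg [in RHS]big_mkcond big_ord_recl /= add0r.
rewrite big_mkcond; apply: eq_bigr => r _; rewrite !mxE /= /bump /= add1n ltnS.
by case: (leqP k r) => // hkr; rewrite lift_eq_lift0 // (leq_trans hik hkr).
Qed.

Lemma subdiag_cond_minor_col0 m (M : 'M[int]_m.+1) i e :
  diag_nonneg M -> subdiag_cond M e -> subdiag_cond (row' i (col' ord0 M)) e.
Proof.
move=> h1 h2 k l hkl; rewrite !mxE.
case: (leqP i k) => [hik|hki] hneg.
  have lift_k : (lift i k : nat) = k.+1 by rewrite /= /bump hik.
  rewrite tail_deg_minor_col0 // -lift_k; apply: h2 hneg.
  by rewrite /= /bump hik /= hkl.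
have diag : lift i k = lift ord0 l.
  by apply/val_inj; rewrite /= /bump leqNgt hki /= hkl.
by move: hneg; rewrite diag ltNge h1.
Qed.

Definition extend_col0 (R : pzRingType) m (i : 'I_m.+1) (A : 'M[R]_m) :
    'M[R]_m.+1 :=
  \matrix_(r, c) match unlift ord0 c, unlift i r with
    | None, _ => (-1) ^+ i *+ (r == i)
    | Some c', Some r' => A r' c'
    | Some _, None => 0
    end.

Lemma minor_extend_col0 (R : pzRingType) m (i : 'I_m.+1) (A : 'M[R]_m) :
  row' i (col' ord0 (extend_col0 i A)) = A.
Proof. by apply/matrixP => r c; rewrite !mxE !liftK. Qed.

Lemma det_extend_col0 (R : comPzRingType) m (i : 'I_m.+1) (A : 'M[R]_m) :
  \det (extend_col0 i A) = \det A.
Proof.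
rewrite (expand_det_col _ ord0) (bigD1 i) //= big1 ?addr0; last first.
  by move=> r hr; rewrite mxE unlift_none (negbTE hr) mul0r.
rewrite mxE unlift_none eqxx /cofactor minor_extend_col0 addn0 mulrA -exprD.
by rewrite -signr_odd oddD addbb expr0 mul1r.
Qed.

Lemma has_degree_matrix_extend_col0 (F : closedFieldType) m
    (M : 'M[int]_m.+1) i (A : 'M[{mpoly F[3]}]_m) :
  M i ord0 = 0 -> has_degree_matrix A (row' i (col' ord0 M)) ->
  has_degree_matrix (extend_col0 i A) M.
Proof.
move=> Mi0 hA r c; rewrite mxE.
case: (unliftP ord0 c) => [c'|] ->.
  case: (unliftP i r) => [r'|] ->; first by have := hA r' c'; rewrite !mxE.
  by case: ifP => _ //; exact: dhomog0.
case: (eqVneq r i) => [->|_]; last by case: ifP => _ //; exact: dhomog0.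
have minus1_form : (-1 : {mpoly F[3]}) \is 0.-homog for (@mdeg 3).
  by rewrite rpredN dhomog1.
by rewrite Mi0 /= mulr1n /form; have := dhomogMn i minus1_form; rewrite mul0n.
Qed.

Lemma det_with_degree_matrix_minor_col0 (F : closedFieldType) m
    (M : 'M[int]_m.+1) i (f : {mpoly F[3]}) :
  M i ord0 = 0 -> det_with_degree_matrix (row' i (col' ord0 M)) f ->
  det_with_degree_matrix M f.
Proof.
move=> Mi0 [A [hA <-]]; exists (extend_col0 i A).
by rewrite det_extend_col0; split=> //; apply: has_degree_matrix_extend_col0.
Qed.

Lemma general_form_sub (F : closedFieldType) d (P Q : {mpoly F[3]} -> Prop) :
  (forall f, P f -> Q f) -> general_form d P -> general_form d Q.
Proof.
by move=> PQ [U [zU [neU PU]]]; exists U; split; last split=> // f /PU/PQ.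
Qed.

Theorem lemma5p7 (F : closedFieldType) (charF0 : [pchar F] =i pred0)
  (n : nat) (hn : (2 <= n)%N)
  (IH : forall M' : 'M[int]_(n.-1),
     mx_homogeneous M' -> well_ordered M' -> 0 <= mx_deg M' ->
     (general_form (absz (mx_deg M')) (@det_with_degree_matrix F _ M') <->
      (diag_nonneg M' /\ subdiag_cond M' (mx_deg M'))))
  (M : 'M[int]_n) (hM : mx_homogeneous M) (wM : well_ordered M)
  (h1 : diag_nonneg M) (h2 : subdiag_cond M (mx_deg M))
  (h0 : exists i j : 'I_n, val j = 0%N /\ M i j = 0) :
  general_form (absz (mx_deg M)) (@det_with_degree_matrix F _ M).
Proof.
case: n hn IH M hM wM h1 h2 h0 => [//|m] _ IH M hM wM h1 h2 [i [j [j0 Mi0]]].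
have {j j0} Mi0 : M i ord0 = 0.
  by rewrite -Mi0 (_ : j = ord0) //; exact: val_inj.
have degE : mx_deg (row' i (col' ord0 M)) = mx_deg M.
  by rewrite mx_deg_minor // Mi0 subr0.
have deg_ge0 : 0 <= mx_deg M by apply: sumr_ge0 => r _; apply: h1.
apply: (general_form_sub (P := det_with_degree_matrix (row' i (col' ord0 M)))).
  by move=> f; apply: det_with_degree_matrix_minor_col0.
rewrite -degE; apply/IH.
- exact: mx_homogeneous_minor.
- exact: well_ordered_minor.
- by rewrite degE.
split; first exact: diag_nonneg_minor_col0.
by rewrite degE; apply: subdiag_cond_minor_col0.
Qed.
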